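(* Let $G$ be a finite group and $H$ a core-free subgroup of $G$ contained in a normal subgroup $N$ of $G$ such that $[N:H]=2$. Then $N$ is an elementary abelian $2$-group.
   Context: A subgroup $H$ of $G$ is core-free if it contains no nontrivial normal subgroup of $G$. *)

From mathcomp Require Import all_boot all_fingroup all_solvable.
Set Implicit Arguments. Unset Strict Implicit. Unset Printing Implicit Defensive.
Local Open Scope group_scope.

Definition core_free (gT : finGroupType) (H G : {set gT}) : Prop :=
  forall K : {group gT}, K <| G -> K \subset H -> K :=: 1.

(* A subgroup of index 2 is normal with quotient of order 2, so it contains
   every square and every commutator of the overgroup.  Each conjugate of H
   has index 2 in N, so squares and commutators of elements of N lie in the
   core of H in G, which is trivial. *)
From mathcomp Require Import all_boot all_fingroup all_solvable.
Set Implicit Arguments. Unset Strict Implicit. Unset Printing Implicit Defensive.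
Local Open Scope group_scope.

Section IndexTwo.

Variables (gT : finGroupType) (N K : {group gT}).
Hypotheses (sKN : K \subset N) (iKN : #|N : K| = 2%N).

Let nKN : N \subset 'N(K) := normal_norm (index2_normal sKN iKN).
Let card_quo : #|N / K| = 2%N. Proof. by rewrite card_quotient. Qed.

Lemma index2_expg2 x : x \in N -> x ^+ 2 \in K.
Proof.
move=> Nx; have NKx := subsetP nKN x Nx.
apply: coset_idr; first by rewrite groupX.
by rewrite morphX // -card_quo expg_cardG // mem_quotient.
Qed.

Lemma index2_commg x y : x \in N -> y \in N -> [~ x, y] \in K.
Proof.
move=> Nx Ny; have abNK : abelian (N / K).
  by apply/cyclic_abelian/prime_cyclic; rewrite card_quo.
by apply: (subsetP (der1_min nKN abNK)); apply: mem_commg.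
Qed.

End IndexTwo.

Lemma index2_conj_sub (gT : finGroupType) (G N H : {group gT}) g :
  N <| G -> H \subset N -> #|N : H| = 2%N -> g \in G ->
  H :^ g \subset N /\ #|N : H :^ g| = 2%N.
Proof.
move=> nNG sHN iNH Gg; have NgN := normP (subsetP (normal_norm nNG) g Gg).
by rewrite -NgN conjSg indexJg.
Qed.

Lemma core_free_mem_conjgs_eq1 (gT : finGroupType) (G H : {group gT}) z :
  H \subset G -> core_free H G -> (forall g, g \in G -> z \in H :^ g) -> z = 1.
Proof.
move=> sHG cfH zHG; have : z \in gcore H G by apply/bigcapP.
by rewrite (cfH _ (gcore_normal sHG) (gcore_sub H G)) => /set1P.
Qed.

Theorem mainTheorem5 (gT : finGroupType) (G N H : {group gT}) :
  H \subset G -> core_free H G -> N <| G -> H \subset N -> #|N : H| = 2%N ->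
  2.-abelem N.
Proof.
move=> sHG cfH nNG sHN iNH.
have conjH := index2_conj_sub nNG sHN iNH.
apply/abelemP => //; split.
  apply/centsP => x Nx y Ny; apply/commgP/eqP.
  apply: (core_free_mem_conjgs_eq1 sHG cfH) => g /conjH[sHgN iHgN].
  exact: index2_commg sHgN iHgN _ _ Nx Ny.
move=> x Nx; apply: (core_free_mem_conjgs_eq1 sHG cfH) => g /conjH[sHgN iHgN].
exact: index2_expg2 sHgN iHgN _ Nx.
Qed.
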